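(* Let $k>8$ be an integer, $\theta=2\pi/k$, $G=(V,E)$ a unit disk graph, $Y_k=(V,E_Y)$ its Yao graph and $YS_k=(V,E_{YS})$ the output of the Sink step applied to $Y_k$. Let $\overrightarrow{uv}\in E_Y$ and let $w_0=v,w_1,\dots,w_h=u$ be vertices, all lying in $K_v(u)$, such that for each $i=1,\dots,h$: $\overrightarrow{w_iw_{i-1}}\in E_{YS}$, $w_i\in K_{w_{i-1}}(u)$, and $\mathrm{ID}(\overrightarrow{w_iw_{i-1}})\le\mathrm{ID}(\overrightarrow{uw_{i-1}})$. Then there exists $\ell\le h$ such that $|vw_\ell|\ge |uv|/(2\cos\theta)$ and $\sum_{i=0}^{\ell-1}|w_iw_{i+1}|\le \frac{|vw_\ell|}{\cos 2\theta}$.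
   Context: Unit disk graph: $V$ a finite point set in the plane, $E=\{uv:|uv|\le1\}$ with $|uv|$ Euclidean distance. Cones: at each point $x$ the plane is partitioned into $k$ half-open half-closed cones with apex $x$ of angle $\theta$, bounded by $k$ equally spaced rays (same directions at every node); $K_x(y)$ is the cone with apex $x$ containing $y$; $K_x$ an arbitrary such cone. Identifiers: nodes have distinct IDs; $\mathrm{ID}(\overrightarrow{xy})=(|xy|,\mathrm{ID}(x),\mathrm{ID}(y))$ compared lexicographically; $\mathrm{ID}(xy)=\min\{\mathrm{ID}(\overrightarrow{xy}),\mathrm{ID}(\overrightarrow{yx})\}$. Yao step: for each node $x$ and each cone $K_x$ containing the other endpoint of some edge of $E$ incident to $x$, add to $E_Y$ the directed edge $\overrightarrow{xy}$ where $xy$ is such an edge with lowest $\mathrm{ID}(xy)$. Sink step on $(V,E_Y)$: set $E_{YS}=\emptyset$. For each node $v$ and each cone $K_v$: let $I$ be the set of $x$ with $\overrightarrow{xv}\in E_Y$, $x\in K_v$; set $I(v)\leftarrow I$, $J\leftarrow(v)$ (ordered sequence), $T(v)\leftarrow\emptyset$. Repeat until $I$ is empty: remove the first vertex $x$ from $J$; for each cone $K_x$, let $w\in I(x)\cap K_x$ minimize $\mathrm{ID}(\overrightarrow{wx})$ (if any), add $\overrightarrow{wx}$ to $T(v)$, move $w$ from $I$ to $J$, set $I(w)\leftarrow I(x)\cap K_x$. Then add the directed edges of $T(v)$ to $E_{YS}$. *)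

From HB Require Import structures.
From mathcomp Require Import all_boot all_order all_algebra.
From mathcomp Require Import boolp reals trigo.
Set Implicit Arguments. Unset Strict Implicit. Unset Printing Implicit Defensive.
Import Order.TTheory GRing.Theory Num.Theory.
Local Open Scope ring_scope.

Section UDG.
Context {R : realType} {T : finType}.
(* pt : positions of the nodes; id : their identifiers; k : number of cones;
   alpha : direction of the first cone-bounding ray (same at every node). *)
Variables (pt : T -> R * R) (id : T -> nat) (k : nat) (alpha : R).

Definition theta : R := 2 * pi / k%:R.

Definition dist (x y : T) : R :=
  Num.sqrt (((pt x).1 - (pt y).1) ^+ 2 + ((pt x).2 - (pt y).2) ^+ 2).

Definition udg_edge (x y : T) : bool := (x != y) && (dist x y <= 1).

Definition inCone (j : nat) (x y : T) : bool :=
  `[< exists r phi : R, 0 < r /\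
        alpha + j%:R * theta <= phi < alpha + j.+1%:R * theta /\
        (pt y).1 = (pt x).1 + r * cos phi /\ (pt y).2 = (pt x).2 + r * sin phi >].

Definition sameCone (x y z : T) : bool :=
  [exists j : 'I_k, inCone j x y && inCone j x z].

Definition IDd (x y : T) : R * nat * nat := (dist x y, id x, id y).

Definition lexle (a b : R * nat * nat) : bool :=
  (a.1.1 < b.1.1) ||
  ((a.1.1 == b.1.1) && ((a.1.2 < b.1.2)%N || ((a.1.2 == b.1.2) && (a.2 <= b.2)%N))).

Definition IDu (x y : T) : R * nat * nat :=
  if lexle (IDd x y) (IDd y x) then IDd x y else IDd y x.

Definition EY (x y : T) : bool :=
  udg_edge x y &&
  [forall z, (udg_edge x z && sameCone x y z) ==> lexle (IDu x y) (IDu x z)].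

(* Sink step.  State: (I, J, I(.), T(v)); a pair (w, x) in T(v) encodes the
   directed edge wx. *)
Definition sstate := ({set T} * seq T * (T -> {set T}) * {set T * T})%type.

Definition process_cone (x : T) (st : sstate) (j : 'I_k) : sstate :=
  let: (Is, J, Im, Tv) := st in
  let S := [set y in Im x | inCone j x y] in
  match [pick w in S | [forall y in S, lexle (IDd w x) (IDd y x)]] with
  | Some w => (Is :\ w, rcons J w, (fun z => if z == w then S else Im z), (w, x) |: Tv)
  | None => st
  end.

Definition sink_iter (st : sstate) : sstate :=
  let: (Is, J, Im, Tv) := st in
  match J with
  | [::] => st
  | x :: J' => foldl (process_cone x) (Is, J', Im, Tv) (enum 'I_k)
  end.

(* "repeat until I is empty" (#|T|.+1 iterations always suffice) *)
Fixpoint sink_loop (n : nat) (st : sstate) : sstate :=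
  if n is n'.+1 then
    let: (Is, _, _, _) := st in
    if Is == set0 then st else sink_loop n' (sink_iter st)
  else st.

Definition sink_tree (v : T) (j : 'I_k) : {set T * T} :=
  let I0 := [set x | EY x v & inCone j v x] in
  (sink_loop #|T|.+1 (I0, [:: v], (fun z => if z == v then I0 else set0), set0)).2.

Definition EYS (x y : T) : bool :=
  [exists v, exists j : 'I_k, (x, y) \in sink_tree v j].

End UDG.

From HB Require Import structures.
From mathcomp Require Import all_boot all_order all_algebra.
From mathcomp Require Import boolp reals trigo.
From mathcomp Require Import ring lra.
Import Order.TTheory GRing.Theory Num.Theory.
Local Open Scope ring_scope.

(* Let [l] be the first index with [|v w_l| >= |uv| / (2 cos theta)].  For
   [i < l], [w_i] lies in [K_v(u)] and is closer than [|uv| / (2 cos theta)]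
   to [v]; as [theta < pi/4] this keeps the direction from [w_i] to [u] within
   [theta] of [vu], so the edge [w_i w_(i+1)], which lies in [K_(w_i)(u)],
   makes an angle of at most [2 theta] with [vu].  Projecting the path
   [w_0 ... w_l] onto [vu] bounds its length by [|v w_l| / cos (2 theta)]. *)

Section PlaneVectors.
Context {R : rcfType}.
Implicit Types (x y z a p e : R * R).

Definition dotp x y : R := x.1 * y.1 + x.2 * y.2.
Definition crossp x y : R := x.1 * y.2 - x.2 * y.1.
Definition normp x : R := Num.sqrt (x.1 ^+ 2 + x.2 ^+ 2).

Lemma normp_ge0 x : 0 <= normp x. Proof. exact: sqrtr_ge0. Qed.

Lemma sqr_normp x : normp x ^+ 2 = dotp x x.
Proof. by rewrite sqr_sqrtr ?addr_ge0 ?sqr_ge0 // /dotp !expr2. Qed.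

Lemma normpN x : normp (- x) = normp x.
Proof. by rewrite /normp /= !sqrrN. Qed.

Lemma normp0 : normp 0 = 0.
Proof. by rewrite /normp /= expr0n /= addr0 sqrtr0. Qed.

Lemma normp_eq0 x : (normp x == 0) = (x == 0).
Proof.
case: x => x1 x2; rewrite sqrtr_eq0 /= le_eqVlt ltNge addr_ge0 ?sqr_ge0 // orbF.
by rewrite paddr_eq0 ?sqr_ge0 // !sqrf_eq0 xpair_eqE.
Qed.

Lemma normp_gt0 x : (0 < normp x) = (x != 0).
Proof. by rewrite lt_def normp_ge0 andbT normp_eq0. Qed.

Lemma dotpC x y : dotp x y = dotp y x.
Proof. by rewrite /dotp mulrC [x.2 * _]mulrC. Qed.

Lemma dotpBl x y z : dotp (x - y) z = dotp x z - dotp y z.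
Proof. by rewrite /dotp /=; ring. Qed.

Lemma sqr_dotp_crossp x y :
  dotp x y ^+ 2 + crossp x y ^+ 2 = (normp x * normp y) ^+ 2.
Proof. by rewrite exprMn !sqr_normp /dotp /crossp; ring. Qed.

Lemma dotp_le_normp x y : dotp x y <= normp x * normp y.
Proof.
apply: le_trans (ler_norm _) _.
rewrite -(@ler_pXn2r _ 2) ?nnegrE ?mulr_ge0 ?normp_ge0 // real_normK ?num_real //.
by rewrite -sqr_dotp_crossp lerDl sqr_ge0.
Qed.

(* Holds trivially when [x] or [y] is zero. *)
Definition cos_angle_ge (c : R) x y : bool := normp x * normp y * c <= dotp x y.

Lemma cos_angle_geC c x y : cos_angle_ge c x y = cos_angle_ge c y x.
Proof. by rewrite /cos_angle_ge dotpC (mulrC (normp x)). Qed.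

Lemma cos_angle_ge0l c a : cos_angle_ge c 0 a.
Proof. by rewrite /cos_angle_ge normp0 !mul0r /dotp /= !mul0r addr0. Qed.

Section CosSin.
Context {c s : R}.

Lemma cos_angle_ge_crossp {x y} : 0 <= c -> 0 <= s -> c ^+ 2 + s ^+ 2 = 1 ->
  cos_angle_ge c x y -> `|crossp x y| <= normp x * normp y * s.
Proof.
rewrite /cos_angle_ge => c_ge0 s_ge0 cs1 dxy.
have nxy := mulr_ge0 (normp_ge0 x) (normp_ge0 y).
have lag := sqr_dotp_crossp x y.
rewrite -(@ler_pXn2r _ 2) ?nnegrE ?normr_ge0 ?mulr_ge0 ?normp_ge0 //.
have Nc_ge0 : 0 <= normp x * normp y * c by rewrite mulr_ge0.
have : (normp x * normp y * c) ^+ 2 <= dotp x y ^+ 2.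
  by rewrite ler_pXn2r ?nnegrE // (le_trans Nc_ge0 dxy).
rewrite real_normK ?num_real // !exprMn (_ : s ^+ 2 = 1 - c ^+ 2); lra.
Qed.

(* Angles add: [(x.z) |y|^2 = (x.y)(y.z) + (x^y)(z^y)]. *)
Lemma cos_angle_ge_trans {x y z} : 0 <= c -> 0 <= s -> c ^+ 2 + s ^+ 2 = 1 ->
  0 < normp y -> cos_angle_ge c x y -> cos_angle_ge c y z ->
  cos_angle_ge (c ^+ 2 - s ^+ 2) x z.
Proof.
move=> c_ge0 s_ge0 cs1 ny_gt0 dxy dyz.
have cxy := cos_angle_ge_crossp c_ge0 s_ge0 cs1 dxy.
have czy : `|crossp z y| <= normp z * normp y * s.
  by apply: cos_angle_ge_crossp; rewrite // cos_angle_geC.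
have split_xz : dotp x z * normp y ^+ 2 =
    dotp x y * dotp y z + crossp x y * crossp z y.
  by rewrite sqr_normp /dotp /crossp; ring.
have dotp_prod : normp x * normp y * c * (normp y * normp z * c)
    <= dotp x y * dotp y z.
  by apply: ler_pM => //; rewrite !mulr_ge0 ?normp_ge0.
have crossp_prod : - (normp x * normp y * s * (normp z * normp y * s))
    <= crossp x y * crossp z y.
  by apply: lerNnormlW; rewrite normrM; apply: ler_pM.
rewrite /cos_angle_ge -(ler_pM2r (exprn_gt0 2 ny_gt0)) split_xz.
apply: le_trans (lerD dotp_prod crossp_prod).
by rewrite le_eqVlt; apply/orP; left; apply/eqP; ring.
Qed.

(* With [D = M cos phi], [|X| = M sin phi], [c = cos theta], [s = sin theta]
   and [phi <= theta <= pi/4], this says [sin (phi + theta) <= sin (2 theta)]. *)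
Lemma sin_addl_le {M D X : R} : 0 <= c -> 0 <= s -> c ^+ 2 + s ^+ 2 = 1 ->
  s <= c -> 0 <= M -> D ^+ 2 + X ^+ 2 = M ^+ 2 -> M * c <= D ->
  c * `|X| <= s * (2 * M * c - D).
Proof.
move=> c_ge0 s_ge0 cs1 s_le_c M_ge0 DXM MD.
have c_ge_half : 1 / 2 <= c by nra.
have D_le_M : D <= M by nra.
have X2 : `|X| ^+ 2 = M ^+ 2 - D ^+ 2 by rewrite real_normK ?num_real //; lra.
have rhs_ge0 : 0 <= s * (2 * M * c - D) by rewrite mulr_ge0 //; nra.
rewrite -(@ler_pXn2r _ 2) ?nnegrE ?rhs_ge0 ?mulr_ge0 ?normr_ge0 //.
have gap : 0 <= (D - M * c) * (D - M * c * (3 * s ^+ 2 - c ^+ 2)).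
  apply: mulr_ge0; first lra.
  have : M * c * (3 * s ^+ 2 - c ^+ 2) <= M * c.
    by apply: ler_piMr; [rewrite mulr_ge0 | nra].
  lra.
have s2 : s ^+ 2 = 1 - c ^+ 2 by lra.
have -> : (s * (2 * M * c - D)) ^+ 2 = c ^+ 2 * (M ^+ 2 - D ^+ 2)
    + (D - M * c) * (D - M * c * (3 * s ^+ 2 - c ^+ 2)) by rewrite exprMn s2; ring.
by rewrite exprMn X2 lerDl.
Qed.

(* The tangent of the angle between [a - p] and [a] is [|p ^ a| / (|a|^2 - p.a)];
   [sin_addl_le] and [2 |p| |a| c <= |a|^2] bound it by [s / c]. *)
Lemma cos_angle_ge_subl {p a} : 0 <= c -> 0 <= s -> c ^+ 2 + s ^+ 2 = 1 ->
  s <= c -> 0 < normp a -> cos_angle_ge c p a -> 2 * c * normp p <= normp a ->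
  cos_angle_ge c (a - p) a.
Proof.
move=> c_ge0 s_ge0 cs1 s_le_c a_gt0 dpa near.
have key := sin_addl_le c_ge0 s_ge0 cs1 s_le_c
  (mulr_ge0 (normp_ge0 p) (normp_ge0 a)) (sqr_dotp_crossp p a) dpa.
set L := normp a in a_gt0 near key *; set D := dotp p a in key *.
set X := crossp p a in key *.
have DM : D <= normp p * L := dotp_le_normp p a.
have dotE : dotp (a - p) a = L ^+ 2 - D by rewrite dotpBl /L sqr_normp.
have normE : (normp (a - p) * L) ^+ 2 = (L ^+ 2 - D) ^+ 2 + X ^+ 2.
  by rewrite /L /D /X exprMn !sqr_normp /dotp /crossp /=; ring.
rewrite /cos_angle_ge dotE -/L.
have np_ge0 := normp_ge0 p.
have ML : 2 * (normp p * L) * c <= L ^+ 2 by nra.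
have two_c_ge1 : 1 <= 2 * c by nra.
have npL_ge0 : 0 <= normp p * L by rewrite mulr_ge0 // ltW.
have LD : 0 <= L ^+ 2 - D by nra.
have cX : c * `|X| <= s * (L ^+ 2 - D).
  by apply: (le_trans key); rewrite ler_wpM2l // lerD2r.
have cX2 : c ^+ 2 * X ^+ 2 <= s ^+ 2 * (L ^+ 2 - D) ^+ 2.
  rewrite -[X ^+ 2]real_normK ?num_real // -!exprMn.
  by rewrite ler_pXn2r ?nnegrE ?mulr_ge0 ?normr_ge0.
rewrite -(@ler_pXn2r _ 2) ?nnegrE ?LD ?mulr_ge0 ?normp_ge0 ?(ltW a_gt0) //.
have split1 : (L ^+ 2 - D) ^+ 2 * c ^+ 2 + (L ^+ 2 - D) ^+ 2 * s ^+ 2 = (L ^+ 2 - D) ^+ 2.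
  by rewrite -mulrDr cs1 mulr1.
rewrite exprMn normE; lra.
Qed.

Lemma cos_angle_ge_step {p e a} : 0 <= c -> 0 <= s -> c ^+ 2 + s ^+ 2 = 1 ->
  s <= c -> 0 < normp a -> 0 < normp (a - p) ->
  cos_angle_ge c p a -> 2 * c * normp p <= normp a ->
  cos_angle_ge c (a - p) e -> cos_angle_ge (c ^+ 2 - s ^+ 2) e a.
Proof.
move=> c_ge0 s_ge0 cs1 s_le_c a_gt0 ap_gt0 dpa near dape.
rewrite cos_angle_geC; apply: (cos_angle_ge_trans c_ge0 s_ge0 cs1 ap_gt0) => //.
by rewrite cos_angle_geC; apply: cos_angle_ge_subl.
Qed.

End CosSin.

(* Project every edge onto [a] and telescope. *)
Lemma path_length_le (c : R) (q : nat -> R * R) a (l : nat) :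
  0 < c -> 0 < normp a ->
  (forall i, (i < l)%N -> cos_angle_ge c (q i.+1 - q i) a) ->
  \sum_(i < l) normp (q i.+1 - q i) <= normp (q l - q 0%N) / c.
Proof.
move=> c_gt0 a_gt0 edges.
rewrite ler_pdivlMr // -(ler_pM2r a_gt0).
apply: le_trans (dotp_le_normp _ _).
rewrite dotpBl -(telescope_sumr (fun i => dotp (q i) a)) // big_mkord.
rewrite !mulr_suml; apply: ler_sum => i _.
by rewrite -dotpBl mulrAC; apply: edges.
Qed.

End PlaneVectors.

Lemma cos_twice {R : realType} (x : R) : cos (2 * x) = cos x ^+ 2 - sin x ^+ 2.
Proof. by rewrite mulr_natl mulr2n cosD !expr2. Qed.

Lemma cos_sin_theta (R : realType) (k : nat) : (8 < k)%N ->
  [/\ theta k <= pi :> R, 0 < cos (theta k : R), 0 <= sin (theta k : R),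
      sin (theta k : R) <= cos (theta k) & 0 < cos (2 * theta k : R)].
Proof.
move=> k_gt8; have pi_gt0 := @pi_gt0 R.
have k_ge9 : 9 <= k%:R :> R by rewrite (ler_nat R 9 k).
have theta_k : (theta k : R) * k%:R = 2 * pi by rewrite /theta mulfVK // gt_eqF //; lra.
have theta_gt0 : 0 < (theta k : R) by nra.
have theta_small : (theta k : R) * 9 <= 2 * pi by nra.
have c_gt0 : 0 < cos (theta k : R) by apply: cos_gt0_pihalf; apply/andP; split; lra.
have s_ge0 : 0 <= sin (theta k : R) by apply: sin_ge0_pi; apply/andP; split; lra.
have c2_gt0 : 0 < cos (2 * theta k : R) by apply: cos_gt0_pihalf; apply/andP; split; lra.
split => //; first lra.
by move: c2_gt0; rewrite cos_twice; nra.
Qed.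

Section ConeGeometry.
Context {R : realType} {T : finType} (pt : T -> R * R) (k : nat) (alpha : R).
Implicit Types (x y z : T).

Lemma distE x y : dist pt x y = normp (pt y - pt x).
Proof. by rewrite -normpN opprB. Qed.

Lemma dist_sym x y : dist pt x y = dist pt y x.
Proof. by rewrite !distE -normpN opprB. Qed.

Lemma normp_polar (r phi : R) : 0 <= r -> normp (r * cos phi, r * sin phi) = r.
Proof.
by move=> r_ge0; rewrite /normp /= !exprMn -mulrDr cos2Dsin2 mulr1 sqrtr_sqr ger0_norm.
Qed.

Lemma dotp_polar (r1 f1 r2 f2 : R) :
  dotp (r1 * cos f1, r1 * sin f1) (r2 * cos f2, r2 * sin f2) = r1 * r2 * cos (f1 - f2).
Proof. by rewrite /dotp /= cosB; ring. Qed.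

Lemma inCone_polar (j : nat) x y : inCone pt k alpha j x y ->
  exists r phi : R, [/\ 0 < r,
    alpha + j%:R * theta k <= phi < alpha + j%:R * theta k + theta k &
    pt y - pt x = (r * cos phi, r * sin phi)].
Proof.
move/asboolP => [r [phi [r_gt0 [phi_in [e1 e2]]]]]; exists r, phi; split => //.
  by move: phi_in; rewrite -addn1 natrD mulrDl mul1r addrA.
by apply: injective_projections; rewrite /= ?e1 ?e2 addrC addKr.
Qed.

Lemma sameCone_dist_gt0 x y z : sameCone pt k alpha x y z -> 0 < dist pt x y.
Proof.
case/existsP => j /andP[/inCone_polar[r [phi [r_gt0 _ e]]] _].
by rewrite distE e normp_polar // ltW.
Qed.

Lemma sameCone_cos_angle_ge x y z : theta k <= pi :> R -> sameCone pt k alpha x y z ->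
  cos_angle_ge (cos (theta k)) (pt y - pt x) (pt z - pt x).
Proof.
move=> theta_le_pi /existsP[j /andP[]].
move=> /inCone_polar[r1 [f1 [r1_gt0 /andP[f1_lo f1_hi] ->]]].
move=> /inCone_polar[r2 [f2 [r2_gt0 /andP[f2_lo f2_hi] ->]]].
rewrite /cos_angle_ge !normp_polar ?(ltW r1_gt0) ?(ltW r2_gt0) // dotp_polar.
rewrite ler_pM2l ?mulr_gt0 //.
have theta_ge0 : 0 <= (theta k : R) by lra.
rewrite -[cos (f1 - f2)]cos_norm ltW // ltr_cos ?in_itv /= ?normr_ge0 ?theta_ge0 ?theta_le_pi //.
  by rewrite ltr_norml; apply/andP; split; lra.
by apply: ltW; rewrite ltr_norml; apply/andP; split; lra.
Qed.

Lemma cone_step_cos_angle_ge (u v x y : T) : (8 < k)%N ->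
  x = v \/ sameCone pt k alpha v u x -> sameCone pt k alpha x u y ->
  2 * cos (theta k) * dist pt v x <= dist pt v u ->
  cos_angle_ge (cos (2 * theta k)) (pt y - pt x) (pt u - pt v).
Proof.
move=> k_gt8 x_near xuy far.
have [theta_le_pi c_gt0 s_ge0 s_le_c _] := cos_sin_theta R k k_gt8.
have dpa : cos_angle_ge (cos (theta k)) (pt x - pt v) (pt u - pt v).
  case: x_near => [->|vux]; first by rewrite subrr cos_angle_ge0l.
  by rewrite cos_angle_geC; apply: sameCone_cos_angle_ge.
have a_gt0 : 0 < normp (pt u - pt v).
  rewrite -distE; case: x_near => [<-|]; last exact: sameCone_dist_gt0.
  exact: sameCone_dist_gt0 xuy.
have ap : (pt u - pt v) - (pt x - pt v) = pt u - pt x.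
  by rewrite opprB addrA subrK.
rewrite cos_twice; apply: (cos_angle_ge_step (p := pt x - pt v)); rewrite ?ap //.
- exact: ltW.
- exact: cos2Dsin2.
- by rewrite -distE; apply: sameCone_dist_gt0 xuy.
- by rewrite -!distE.
- exact: sameCone_cos_angle_ge.
Qed.

End ConeGeometry.

Theorem lemma3 (R : realType) (T : finType) (pt : T -> R * R) (id : T -> nat)
    (k : nat) (alpha : R)
    (pt_inj : injective pt) (id_inj : injective id) (hk : (8 < k)%N)
    (u v : T) (huv : EY pt id k alpha u v)
    (h : nat) (w : nat -> T) (hw0 : w 0%N = v) (hwh : w h = u)
    (hcone : forall i, (1 <= i <= h)%N -> sameCone pt k alpha v u (w i))
    (hsink : forall i, (1 <= i <= h)%N -> EYS pt id k alpha (w i) (w i.-1))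
    (hcone' : forall i, (1 <= i <= h)%N -> sameCone pt k alpha (w i.-1) u (w i))
    (hid : forall i, (1 <= i <= h)%N ->
       lexle (IDd pt id (w i) (w i.-1)) (IDd pt id u (w i.-1))) :
  exists l : nat, (l <= h)%N /\
    dist pt u v / (2 * cos (theta k)) <= dist pt v (w l) /\
    \sum_(i < l) dist pt (w i) (w i.+1) <= dist pt v (w l) / cos (2 * theta k).
Proof.
(* Only the cone conditions and [u != v] enter the argument. *)
have [_ c_gt0 s_ge0 s_le_c c2_gt0] := cos_sin_theta R k hk.
have two_c_gt0 : 0 < 2 * cos (theta k : R) by rewrite mulr_gt0.
pose P l := dist pt u v / (2 * cos (theta k)) <= dist pt v (w l).
have Ph : P h.
  rewrite /P hwh dist_sym ler_pdivrMr // ler_peMr ?distE ?normp_ge0 //.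
  by have := cos2Dsin2 (theta k : R); nra.
have [l Pl min_l] := ex_minnP (ex_intro P h Ph).
exists l; split; first exact: min_l.
split=> //.
have uv : pt u != pt v by rewrite (inj_eq pt_inj); case/andP: huv => /andP[].
rewrite distE -hw0; under eq_bigr do rewrite distE.
apply: (path_length_le _ (fun i => pt (w i)) (pt u - pt v) _ c2_gt0) => [|i i_lt_l].
  by rewrite normp_gt0 subr_eq0.
have i_lt_h : (i < h)%N := leq_trans i_lt_l (min_l h Ph).
apply: cone_step_cos_angle_ge hk _ (hcone' i.+1 i_lt_h) _.
  by case: i {i_lt_l} i_lt_h => [|i] i_lt_h /=; [left | right; apply: hcone; exact: ltnW].
have : dist pt v (w i) < dist pt u v / (2 * cos (theta k)).
  by rewrite ltNge; apply: contraTN i_lt_l => /min_l; rewrite -leqNgt.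
by rewrite ltr_pdivlMr // mulrC [dist pt u v]dist_sym => /ltW.
Qed.
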